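(* Let $n_1,\dots,n_d\ge 1$ and let $C\subseteq\mathrm{HS}(n_1,\dots,n_d)$ be a code with $M=|C|\ge 1$ codewords such that $d(x,y)\ge\delta$ for all distinct $x,y\in C$, where $\delta>0$. Put $r=1-\sum_{i=1}^d (d\,n_i)^{-1}$ and suppose $rd<\delta$. Then \[M\le\left\lfloor\frac{\delta}{\delta-rd}\right\rfloor.\]
   Context: For an integer $m$ let $[m]=\{0,\dots,m-1\}$. The cuboidal Hamming space $\mathrm{HS}(n_1,\dots,n_d)$ is $[n_1]\times\cdots\times[n_d]$ with Hamming distance $d(x,y)=|\{i:x_i\ne y_i\}|$. *)

From HB Require Import structures.
From mathcomp Require Import all_boot all_order all_algebra.
Set Implicit Arguments. Unset Strict Implicit. Unset Printing Implicit Defensive.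
Import Order.TTheory GRing.Theory Num.Theory.

Definition HS (d : nat) (n : 'I_d -> nat) : finType :=
  {dffun forall i : 'I_d, 'I_(n i)}.

Definition hdist (d : nat) (n : 'I_d -> nat) (x y : HS n) : nat :=
  #|[set i : 'I_d | x i != y i]|.

From mathcomp Require Import all_boot all_order all_algebra.
From mathcomp Require Import ring lra.
Import Order.TTheory GRing.Theory Num.Theory.
Local Open Scope ring_scope.

(* Plotkin's averaging argument.  Let S be the sum of d(x, y) over all ordered
   pairs of codewords.  Separation gives S >= M (M - 1) delta.  Splitting S by
   coordinates, coordinate i contributes M^2 - sum_a c_a^2, where c_a counts the
   codewords with x_i = a; by Cauchy-Schwarz sum_a c_a^2 >= M^2 / n_i, so
   S <= M^2 sum_i (1 - 1/n_i) = M^2 r d.  Comparing the bounds yields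
   M (delta - r d) <= delta. *)

Lemma sqr_sum_le_card_sum_sqr (R : realDomainType) (I : finType) (c : I -> R) :
  (\sum_i c i) ^+ 2 <= #|I|%:R * \sum_i c i ^+ 2.
Proof.
have inner i : \sum_j (c i - c j) ^+ 2
    = #|I|%:R * c i ^+ 2 + \sum_j c j ^+ 2 - (c i * \sum_j c j) *+ 2.
  under eq_bigr do rewrite sqrrB.
  by rewrite !big_split sumrN /= sumr_const sumrMnl -mulr_sumr mulr_natl addrAC.
have : 0 <= \sum_i \sum_j (c i - c j) ^+ 2.
  by apply: sumr_ge0 => i _; apply: sumr_ge0 => j _; exact: sqr_ge0.
rewrite (eq_bigr _ (fun i _ => inner i)) !big_split sumrN /= sumr_const.
by rewrite sumrMnl -!mulr_suml -mulr_sumr -expr2 -mulr_natl; lra.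
Qed.

Section Fibres.
Variables (T I : finType) (f : T -> I) (A : {pred T}).

Lemma sum_fibre_card (R : nzSemiRingType) :
  \sum_a \sum_(x in A) ((f x == a)%:R : R) = #|A|%:R.
Proof.
rewrite exchange_big /= -sumr_const; apply: eq_bigr => x _.
by rewrite (bigD1 (f x)) //= eqxx big1 ?addr0 // => a /negbTE; rewrite eq_sym => ->.
Qed.

Lemma sum_pairs_eq_sqr_fibres (R : nzSemiRingType) :
  \sum_(x in A) \sum_(y in A) ((f x == f y)%:R : R)
    = \sum_a (\sum_(x in A) ((f x == a)%:R : R)) ^+ 2.
Proof.
symmetry; under eq_bigr do rewrite expr2 mulr_suml.
rewrite exchange_big /=; apply: eq_bigr => x _.
under eq_bigr do rewrite mulr_sumr.
rewrite exchange_big /=; apply: eq_bigr => y _.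
rewrite (bigD1 (f x)) //= big1 ?addr0; first by rewrite eqxx mul1r eq_sym.
by move=> a /negbTE; rewrite eq_sym => ->; rewrite mul0r.
Qed.

Lemma sum_pairs_neq_le (R : realFieldType) : (0 < #|I|)%N ->
  \sum_(x in A) \sum_(y in A) ((f x != f y)%:R : R)
    <= #|A|%:R ^+ 2 * (1 - #|I|%:R^-1).
Proof.
move=> I_gt0.
have neqE x y : ((f x != f y)%:R : R) = 1 - (f x == f y)%:R.
  by case: (f x == f y); rewrite ?subrr ?subr0.
under eq_bigr do under eq_bigr do rewrite neqE.
under eq_bigr do rewrite sumrB sumr_const.
rewrite sumrB sumr_const sum_pairs_eq_sqr_fibres -[#|A|%:R *+ _]mulr_natl -expr2.
rewrite mulrBr mulr1 lerD2l lerN2 ler_pdivrMr ?ltr0n // mulrC.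
by rewrite -sum_fibre_card sqr_sum_le_card_sum_sqr.
Qed.
End Fibres.

Lemma sum_pairs_ge_separated (R : numDomainType) (T : finType) (D : T -> T -> R)
    (A : {set T}) (delta : R) :
  (forall x, 0 <= D x x) ->
  (forall x y, x \in A -> y \in A -> x != y -> delta <= D x y) ->
  #|A|%:R * ((#|A|%:R - 1) * delta) <= \sum_(x in A) \sum_(y in A) D x y.
Proof.
move=> D_diag_ge0 D_sep; rewrite mulr_natl -sumr_const; apply: ler_sum => x xA.
have others : \sum_(y in A | y != x) delta = (#|A|%:R - 1) * delta.
  apply/(addrI delta); rewrite -(bigD1 x xA) sumr_const -mulr_natl; ring.
rewrite (bigD1 x xA) -others -[X in X <= _]add0r /=.
apply: lerD => //; apply: ler_sum => y /andP[yA yx].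
by apply: D_sep => //; rewrite eq_sym.
Qed.

Section CuboidalCode.
Variables (d : nat) (n : 'I_d -> nat).

Lemma natr_hdist (R : nzSemiRingType) (x y : HS n) :
  (hdist x y)%:R = \sum_i ((x i != y i)%:R : R).
Proof.
rewrite /hdist -sum1_card natr_sum big_mkcond /=; apply: eq_bigr => i _.
by rewrite inE; case: (x i != y i).
Qed.

Lemma sum_pairs_hdist_le (R : realFieldType) (C : {set HS n}) :
  (forall i, 0 < n i)%N ->
  \sum_(x in C) \sum_(y in C) ((hdist x y)%:R : R)
    <= #|C|%:R ^+ 2 * \sum_i (1 - (n i)%:R^-1).
Proof.
move=> n_gt0; under eq_bigr do under eq_bigr do rewrite natr_hdist.
under eq_bigr do rewrite exchange_big /=; rewrite exchange_big /= mulr_sumr.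
apply: ler_sum => i _.
by have := @sum_pairs_neq_le _ _ (fun x : HS n => x i) C R; rewrite card_ord; apply.
Qed.

End CuboidalCode.

Lemma plotkin_rdE (R : numFieldType) (d : nat) (n : 'I_d -> nat) :
  (1 - \sum_(i < d) ((d * n i)%:R)^-1) * d%:R = \sum_i (1 - (n i)%:R^-1) :> R.
Proof.
have d_sum1 : d%:R = \sum_(i < d) (1 : R) by rewrite sumr_const card_ord.
rewrite mulrBl mul1r mulr_suml {1}d_sum1 -sumrB; apply: eq_bigr => i _.
have d_neq0 : d%:R != 0 :> R.
  by rewrite pnatr_eq0 -lt0n (leq_ltn_trans _ (ltn_ord i)).
by rewrite natrM invfM mulrAC mulVf // mul1r.
Qed.

Theorem mainTheorem10 (R : archiRealFieldType) (d : nat) (n : 'I_d -> nat)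
  (C : {set HS n}) (delta : R) :
  (forall i, (1 <= n i)%N) ->
  (1 <= #|C|)%N ->
  (0 < delta)%R ->
  (forall x y, x \in C -> y \in C -> x != y -> (delta <= (hdist x y)%:R)%R) ->
  let r : R := (1 - \sum_(i < d) ((d * n i)%:R)^-1)%R in
  (r * d%:R < delta)%R ->
  (#|C|%:Z <= Num.floor (delta / (delta - r * d%:R)))%R.
Proof.
move=> n_gt0 C_gt0 delta_gt0 C_sep r rd_lt_delta.
have := le_trans (@sum_pairs_ge_separated R _ _ C delta (fun x => ler0n _ _) C_sep)
                 (@sum_pairs_hdist_le _ _ R C n_gt0).
rewrite -plotkin_rdE -/r expr2 -mulrA ler_pM2l ?ltr0n //.
by rewrite floor_ge_int ler_pdivlMr ?subr_gt0 // pmulrn; lra.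
Qed.
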